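(* Let $(A,S_A)$ and $(B,S_B)$ be de Vries algebras and let $T\colon(A,S_A)\to(B,S_B)$ and $Q\colon(B,S_B)\to(A,S_A)$ be mutually inverse isomorphisms in $\mathsf{DeV^S}$. Define $f\colon A\to B$ and $g\colon B\to A$ by $f(a)=\bigwedge T[a]$ and $g(b)=\bigwedge Q[b]$. Then $f$ and $g$ are mutually inverse boolean isomorphisms satisfying $a\mathrel{S_A}a'\iff f(a)\mathrel{S_B}f(a')$ (and similarly for $g$), and for all $a\in A$, $b\in B$: $a\mathrel{T}b\iff f(a)\mathrel{S_B}b$ and $b\mathrel{Q}a\iff g(b)\mathrel{S_A}a$.
   Context: A de Vries algebra is a pair $(B,S)$ with $B$ a complete boolean algebra and $S\subseteq B\times B$ satisfying (S1) $0\mathrel{S}0$, $1\mathrel{S}1$; (S2) $a,b\mathrel{S}c\Rightarrow(a\vee b)\mathrel{S}c$; (S3) $a\mathrel{S}c,d\Rightarrow a\mathrel{S}(c\wedge d)$; (S4) $a\le b\mathrel{S}c\le d\Rightarrow a\mathrel{S}d$; (S5) $a\mathrel{S}b\Rightarrow a\le b$; (S6) $a\mathrel{S}b\Rightarrow\neg b\mathrel{S}\neg a$; (S7) $a\mathrel{S}b\Rightarrow\exists c\,(a\mathrel{S}c\mathrel{S}b)$; (S8) $a\ne0\Rightarrow\exists b\ne0,\ b\mathrel{S}a$. $\mathsf{DeV^S}$: objects de Vries algebras; morphisms $(A,S_A)\to(B,S_B)$ are relations $T\subseteq A\times B$ satisfying (S1)–(S4) and $T\circ S_A=T=S_B\circ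 T$; identity on $(A,S_A)$ is $S_A$; composition is relational composition. $T[a]=\{b\mid a\mathrel{T}b\}$. *)

(* boolean algebras as complemented distributive lattices
   with top and bottom (ctbDistrLatticeType). *)
From HB Require Import structures.
From mathcomp Require Import all_boot all_order.
From Stdlib Require Import ClassicalEpsilon.
Set Implicit Arguments. Unset Strict Implicit. Unset Printing Implicit Defensive.
Import Order.Theory.
Local Open Scope order_scope.

Section DeVries.
Context {d : Order.disp_t}.

Definition is_glb {B : ctbDistrLatticeType d} (P : B -> Prop) (m : B) : Prop :=
  (forall x, P x -> m <= x) /\ (forall y, (forall x, P x -> y <= x) -> y <= m).

Definition complete (B : ctbDistrLatticeType d) : Prop :=
  forall P : B -> Prop, exists m, is_glb P m.

Definition bigmeet {B : ctbDistrLatticeType d} (P : B -> Prop) : B :=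
  epsilon (inhabits (\bot : B)) (is_glb P).

Definition S1to4 {dA dB : Order.disp_t} {A : ctbDistrLatticeType dA}
  {B : ctbDistrLatticeType dB} (T : A -> B -> Prop) : Prop :=
  [/\ T \bot \bot /\ T \top \top,
      (forall a b c, T a c -> T b c -> T (a `|` b) c),
      (forall a c e, T a c -> T a e -> T a (c `&` e)) &
      (forall a b c e, a <= b -> T b c -> c <= e -> T a e)].

End DeVries.

Definition rcomp {X Y Z : Type} (R2 : Y -> Z -> Prop) (R1 : X -> Y -> Prop) :
  X -> Z -> Prop := fun x z => exists y, R1 x y /\ R2 y z.

Definition rel_eq {X Y : Type} (R R' : X -> Y -> Prop) : Prop :=
  forall x y, R x y <-> R' x y.

Definition deVries {d : Order.disp_t} (B : ctbDistrLatticeType d)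
  (S : B -> B -> Prop) : Prop :=
  complete B /\
  S1to4 S /\
  (forall a b, S a b -> a <= b) /\
  (forall a b, S a b -> S (~` b) (~` a)) /\
  (forall a b, S a b -> exists c, S a c /\ S c b) /\
  (forall a, a != \bot -> exists b, b != \bot /\ S b a).

Definition devS_morph {dA dB : Order.disp_t} {A : ctbDistrLatticeType dA}
  {B : ctbDistrLatticeType dB} (SA : A -> A -> Prop) (SB : B -> B -> Prop)
  (T : A -> B -> Prop) : Prop :=
  [/\ S1to4 T, rel_eq (rcomp T SA) T & rel_eq (rcomp SB T) T].

Definition bool_hom {dA dB : Order.disp_t} {A : ctbDistrLatticeType dA}
  {B : ctbDistrLatticeType dB} (f : A -> B) : Prop :=
  [/\ f \bot = \bot, f \top = \top,
      (forall x y, f (x `&` y) = f x `&` f y),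
      (forall x y, f (x `|` y) = f x `|` f y) &
      (forall x, f (~` x) = ~` f x)].

From mathcomp Require Import all_boot all_order.
From Stdlib Require Import ClassicalEpsilon.
Import Order.Theory.
Local Open Scope order_scope.

(* Write f a := /\ T[a].  The relation T is recovered from f as T[a] = S_B[f a]:
   one inclusion is T = S_B o T.  Conversely, if f a S_B b then (S6) and
   S_B = T o Q give ~b Q a1 T ~(f a) for some a1, and a /\ a1 = 0, since a
   nonzero y with y Q (a /\ a1) would lie below both f a and ~(f a);
   disjointness from a1 then yields a T b.  Hence Q[f a] = (Q o T)[a] = S_A[a],
   whose meet is a by (S8), so g o f = id and symmetrically f o g = id.  An
   order isomorphism of boolean algebras is a boolean isomorphism, and f
   preserves S because S_A = Q o T. *)

Section Meets.
Context {d : Order.disp_t} {L : ctbDistrLatticeType d}.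
Implicit Types (P Q : L -> Prop) (m x y : L).

Lemma bigmeetP P : complete L -> is_glb P (bigmeet P).
Proof. by move=> CL; apply: epsilon_spec; exact: CL. Qed.

Lemma bigmeet_le P x : complete L -> P x -> bigmeet P <= x.
Proof. by move=> CL; apply: (bigmeetP P CL).1. Qed.

Lemma le_bigmeet P y : complete L -> (forall x, P x -> y <= x) -> y <= bigmeet P.
Proof. by move=> CL; apply: (bigmeetP P CL).2. Qed.

Lemma bigmeetE P m : complete L -> is_glb P m -> bigmeet P = m.
Proof.
move=> CL [mlb mgreatest]; have [Mlb Mgreatest] := bigmeetP P CL.
by apply/le_anti; rewrite (Mgreatest _ mlb) (mgreatest _ Mlb).
Qed.

Lemma is_glb_ext P Q m : (forall x, P x <-> Q x) -> is_glb P m -> is_glb Q m.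
Proof.
move=> PQ [mlb mgreatest]; split=> [x /PQ|y ylb]; first exact: mlb.
by apply: mgreatest => x /PQ; apply: ylb.
Qed.

End Meets.

Lemma deVries_is_glb {d : Order.disp_t} {L : ctbDistrLatticeType d}
    (S : L -> L -> Prop) a :
  deVries S -> is_glb (S a) a.
Proof.
move=> [_ [[_ _ _ S4] [S5 [S6 [_ S8]]]]]; split=> [x /S5 //|m mlb].
rewrite -[a]complK -disj_leC; apply/negPn/negP => /S8 [z [z_neq0 zS]].
have z_le_m : z <= m by apply: le_trans (S5 _ _ zS) (leIl _ _).
have z_le_Cz : z <= ~` z.
  apply: le_trans z_le_m (mlb _ _); apply: S4 (S6 _ _ zS) (lexx _).
  by rewrite lexC leIr.
by move: z_neq0; rewrite -lex0 -(meetxC z) lexI lexx z_le_Cz.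
Qed.

Lemma order_iso_bool_hom {dA dB : Order.disp_t} {A : ctbDistrLatticeType dA}
    {B : ctbDistrLatticeType dB} (f : A -> B) (g : B -> A) :
  cancel f g -> cancel g f ->
  {homo f : x y / x <= y} -> {homo g : x y / x <= y} -> bool_hom f.
Proof.
move=> fK gK f_homo g_homo.
have f_mono : {mono f : x y / x <= y}.
  by move=> x y; apply/idP/idP => [/g_homo|/f_homo //]; rewrite !fK.
have f0 : f \bot = \bot by apply/le_anti; rewrite le0x -[X in _ <= X]gK f_mono le0x.
have f1 : f \top = \top by apply/le_anti; rewrite lex1 -[X in X <= _]gK f_mono lex1.
have fI x y : f (x `&` y) = f x `&` f y.
  apply/le_anti; rewrite lexI !f_mono leIl leIr /=.
  by rewrite -[X in X <= _]gK f_mono lexI -!f_mono !gK leIl leIr.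
have fU x y : f (x `|` y) = f x `|` f y.
  apply/le_anti; rewrite leUx !f_mono leUl leUr andbT.
  by rewrite -[X in _ <= X]gK f_mono leUx -!f_mono !gK leUl leUr.
split=> // x; apply/le_anti/andP; split.
  by rewrite -disj_leC meetC -fI meetxC f0.
have fxUfCx : f x `|` f (~` x) = \top by rewrite -fU joinxC f1.
by rewrite -[X in X <= _]meetx1 -fxUfCx meetUr meetCx join0x leIr.
Qed.

Lemma rcomp_bot_eq0 {dA dB : Order.disp_t} {A : ctbDistrLatticeType dA}
    {B : ctbDistrLatticeType dB}
    (S : A -> A -> Prop) (T : A -> B -> Prop) (Q : B -> A -> Prop) x :
  deVries S -> S1to4 Q -> rel_eq (rcomp Q T) S -> T x \bot -> x = \bot.
Proof.
move=> [_ [_ [S5 _]]] [[Q00 _] _ _ _] QT_S xT0.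
by apply/eqP; rewrite -lex0; apply/S5/QT_S; exists \bot.
Qed.

Section DeVriesIso.
Context {dA dB : Order.disp_t} {A : ctbDistrLatticeType dA}
  {B : ctbDistrLatticeType dB} {SA : A -> A -> Prop} {SB : B -> B -> Prop}
  {T : A -> B -> Prop} {Q : B -> A -> Prop}.
Hypotheses (HA : deVries SA) (HB : deVries SB)
  (HT : devS_morph SA SB T) (HQ : devS_morph SB SA Q)
  (QT_SA : rel_eq (rcomp Q T) SA) (TQ_SB : rel_eq (rcomp T Q) SB).

Lemma T_bot_eq0 x : T x \bot -> x = \bot.
Proof. by case: HQ => Q14 _ _; apply: rcomp_bot_eq0 HA Q14 QT_SA. Qed.

Lemma Q_bot_eq0 y : Q y \bot -> y = \bot.
Proof. by case: HT => T14 _ _; apply: rcomp_bot_eq0 HB T14 TQ_SB. Qed.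

Lemma bigmeet_homo_le : {homo (fun a => bigmeet (T a)) : x y / x <= y}.
Proof.
case: HB => CB _; case: HT => [[_ _ _ T4] _ _] x y x_le_y.
by apply: le_bigmeet => // c yTc; apply: bigmeet_le => //; apply: T4 yTc _.
Qed.

Lemma le_bigmeet_rcomp y u : Q y u -> y <= bigmeet (T u).
Proof.
case: HB => CB [_ [S5B _]] yQu; apply: le_bigmeet => // c uTc.
by apply/S5B/TQ_SB; exists u.
Qed.

Lemma disjoint_rel_compl_bigmeet a a1 :
  T a1 (~` bigmeet (T a)) -> a `&` a1 = \bot.
Proof.
case: HA => _ [_ [_ [_ [_ S8A]]]]; case: HB => CB _.
case: HT => [[_ _ _ T4] _ _] a1Tfa; apply/eqP/negPn/negP.
move=> /S8A [z [z_neq0 /QT_SA [y [zTy yQu]]]].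
have y_neq0 : y != \bot.
  by apply: contraNneq z_neq0 => y0; apply/eqP/T_bot_eq0; rewrite -y0.
have y_le_fu := le_bigmeet_rcomp _ _ yQu.
have fu_le_fa := bigmeet_homo_le _ _ (leIl a a1).
have fu_le_Cfa : bigmeet (T (a `&` a1)) <= ~` bigmeet (T a).
  by apply: bigmeet_le => //; apply: T4 a1Tfa (lexx _); rewrite leIr.
move: y_neq0; rewrite -lex0 -(meetxC (bigmeet (T a))) lexI.
by rewrite (le_trans y_le_fu fu_le_fa) (le_trans y_le_fu fu_le_Cfa).
Qed.

Lemma rel_of_disjoint a b a1 : Q (~` b) a1 -> a `&` a1 = \bot -> T a b.
Proof.
case: HA => _ [_ [_ [S6A _]]]; case: HT => [[_ _ _ T4] _ _].
case: HQ => [[_ _ Q3 Q4] _ SAQ_Q] /SAQ_Q [a3 [CbQa3 a3Sa1]] aa1_eq0.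
have [b' [Ca1Tb' b'QCa3]] := proj2 (QT_SA _ _) (S6A _ _ a3Sa1).
have Cbb'_eq0 : ~` b `&` b' = \bot.
  apply: Q_bot_eq0; rewrite -(meetxC a3).
  by apply: Q3; [apply: Q4 CbQa3 _ | apply: Q4 b'QCa3 _]; rewrite ?leIl ?leIr.
apply: T4 Ca1Tb' _; first by rewrite -disj_leC aa1_eq0.
by rewrite -[b]complK -disj_leC meetC Cbb'_eq0.
Qed.

Lemma rel_bigmeetE a b : T a b <-> SB (bigmeet (T a)) b.
Proof.
case: HB => CB [[_ _ _ S4B] [_ [S6B _]]]; case: HT => _ _ SBT_T.
split=> [/SBT_T [c [aTc cSb]]|/S6B /TQ_SB [a1 [CbQa1 a1TCfa]]].
  by apply: S4B cSb (lexx _); apply: bigmeet_le.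
exact: rel_of_disjoint _ _ _ CbQa1 (disjoint_rel_compl_bigmeet _ _ a1TCfa).
Qed.

Lemma bigmeet_homo_S :
  {homo (fun a => bigmeet (T a)) : a a' / SA a a' >-> SB a a'}.
Proof.
case: HT => [[_ _ _ T4] _ _] a a' /QT_SA [b [aTb bQa']].
by apply/rel_bigmeetE; apply: T4 aTb _; rewrite ?lexx ?le_bigmeet_rcomp.
Qed.

Lemma bigmeetK :
  cancel (fun a => bigmeet (T a)) (fun b => bigmeet (Q b)).
Proof.
case: HA => CA _; case: HQ => _ QSB_Q _ a; apply: bigmeetE => //.
apply: is_glb_ext (deVries_is_glb _ a HA) => a''; split.
  by move=> /QT_SA [b [/rel_bigmeetE faSb bQa'']]; apply/QSB_Q; exists b.
by move=> /QSB_Q [b [/rel_bigmeetE aTb bQa'']]; apply/QT_SA; exists b.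
Qed.

End DeVriesIso.

Theorem lemma5p3 (dA dB : Order.disp_t)
  (A : ctbDistrLatticeType dA) (B : ctbDistrLatticeType dB)
  (SA : A -> A -> Prop) (SB : B -> B -> Prop)
  (T : A -> B -> Prop) (Q : B -> A -> Prop) :
  deVries SA -> deVries SB ->
  devS_morph SA SB T -> devS_morph SB SA Q ->
  rel_eq (rcomp Q T) SA -> rel_eq (rcomp T Q) SB ->
  let f := fun a : A => bigmeet (T a) in
  let g := fun b : B => bigmeet (Q b) in
  cancel f g /\ cancel g f /\ bool_hom f /\ bool_hom g /\
  (forall a a', SA a a' <-> SB (f a) (f a')) /\
  (forall b b', SB b b' <-> SA (g b) (g b')) /\
  (forall a b, T a b <-> SB (f a) b) /\
  (forall b a, Q b a <-> SA (g b) a).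
Proof.
move=> HA HB HT HQ QT TQ f g.
have fK : cancel f g := bigmeetK HA HB HT HQ QT TQ.
have gK : cancel g f := bigmeetK HB HA HQ HT TQ QT.
have f_le : {homo f : x y / x <= y} := bigmeet_homo_le HB HT.
have g_le : {homo g : x y / x <= y} := bigmeet_homo_le HA HQ.
have f_S : {homo f : a a' / SA a a' >-> SB a a'} :=
  bigmeet_homo_S HA HB HT HQ QT TQ.
have g_S : {homo g : b b' / SB b b' >-> SA b b'} :=
  bigmeet_homo_S HB HA HQ HT TQ QT.
do 2!split=> //.
split; first exact: order_iso_bool_hom fK gK f_le g_le.
split; first exact: order_iso_bool_hom gK fK g_le f_le.
split; first by move=> a a'; split=> [/f_S|/g_S] //; rewrite !fK.
split; first by move=> b b'; split=> [/g_S|/f_S] //; rewrite !gK.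
split; [exact: rel_bigmeetE HA HB HT HQ QT TQ | exact: rel_bigmeetE HB HA HQ HT TQ QT].
Qed.
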